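(* Let $C=(C_{i,j})$ be an $m\times n$ evolutionary stable (ES) configuration. Then there are no indices $i,j$ (with all positions below lying in the grid) such that either (Type III) $C_{i-1,j-1}=C_{i,j}=C_{i+1,j+1}=0$ and $C_{i+2,l}=1$ for all $l$ with $j+1\le l\le n$; or (Type IV) $C_{i-1,j-1}=C_{i,j}=C_{i+1,j+1}=0$ and, for all $l$ with $j+1\le l\le n$, $C_{i+1,l}=0$ if $l-(j+1)\equiv 0 \pmod 3$ and $C_{i+1,l}=1$ otherwise. The same holds for the mirror images of these two constellations under the reflection $j\mapsto n+1-j$ of columns (with the row patterns then extending to the left border).
   Context: An $m\times n$ configuration is a $0$-$1$ matrix $C=(C_{i,j})$, $1\le i\le m$, $1\le j\le n$; $C_{i,j}=1$ means lot $(i,j)$ is occupied by a house. Row $1$ is the northernmost, row $m$ the southernmost; column $1$ westernmost, column $n$ easternmost. A house at $(i,j)$ is blocked from sunlight if the three lots $(i,j-1)$, $(i,j+1)$, $(i+1,j)$ all lie inside the grid and are all occupied (lots outside the grid never obstruct sunlight). $C$ is permissible if no house is blocked, and maximal if it is permissible and setting any single empty lot to $1$ yields a non-permissible configuration. A maximal configuration is resistant to predators if, for every empty lot, putting a house on it results in that new house being blocked; it is resistant to altruists if, for every empty lot, putting a house on it results in some other (already existing) house being blocked. An ES configuration is a maximal configuration resistant to both predators and altruists. *)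

From mathcomp Require Import all_boot.
Set Implicit Arguments. Unset Strict Implicit. Unset Printing Implicit Defensive.

(* Configurations: C : nat -> nat -> bool, indices 1-based; only the values
   at lots (i,j) with 1 <= i <= m, 1 <= j <= n are meaningful.
   C i j = true means lot (i,j) is occupied. *)
Definition config := nat -> nat -> bool.

Definition inside (m n i j : nat) : bool := (1 <= i <= m) && (1 <= j <= n).

Definition blocked (m n : nat) (C : config) (i j : nat) : bool :=
  [&& C i j,
      inside m n i j.-1 && C i j.-1,
      inside m n i j.+1 && C i j.+1 &
      inside m n i.+1 j && C i.+1 j].

Definition permissible (m n : nat) (C : config) : Prop :=
  forall i j, inside m n i j -> ~~ blocked m n C i j.

Definition add_house (C : config) (i j : nat) : config :=
  fun a b => if (a == i) && (b == j) then true else C a b.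

Definition maximal (m n : nat) (C : config) : Prop :=
  permissible m n C /\
  forall i j, inside m n i j -> C i j = false ->
    ~ permissible m n (add_house C i j).

Definition resistant_predators (m n : nat) (C : config) : Prop :=
  forall i j, inside m n i j -> C i j = false ->
    blocked m n (add_house C i j) i j.

Definition resistant_altruists (m n : nat) (C : config) : Prop :=
  forall i j, inside m n i j -> C i j = false ->
    exists i' j', inside m n i' j' /\ (i', j') <> (i, j) /\ C i' j' /\
                   blocked m n (add_house C i j) i' j'.

Definition ES (m n : nat) (C : config) : Prop :=
  maximal m n C /\ resistant_predators m n C /\ resistant_altruists m n C.

Definition typeIII (m n : nat) (C : config) (i j : nat) : Prop :=
  (2 <= i) && (i + 2 <= m) /\ (2 <= j) && (j + 1 <= n) /\
      C i.-1 j.-1 = false /\ C i j = false /\ C i.+1 j.+1 = false /\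
      forall l, j + 1 <= l <= n -> C (i + 2) l = true.

Definition typeIV (m n : nat) (C : config) (i j : nat) : Prop :=
  (2 <= i) && (i + 1 <= m) /\ (2 <= j) && (j + 1 <= n) /\
      C i.-1 j.-1 = false /\ C i j = false /\ C i.+1 j.+1 = false /\
      forall l, j + 1 <= l <= n -> C i.+1 l = ((l - (j + 1)) %% 3 != 0).

Definition mirror (n : nat) (C : config) : config := fun i j => C i (n.+1 - j).

(* Only three local consequences of the ES property are used: an empty lot has
   houses to its west, east and south; no house is blocked; and a house put on
   an empty lot blocks a neighbour.  Below a full row, or below a row reading
   0 1 1 0 1 1 ..., these rules force a row that starts with an empty lot to
   read 0 1 1 0 1 1 ... as well, until it breaks as 0 1 0 or reaches the
   eastern border.  Either way, scanning the row above westwards yields two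
   empty lots at distance two, and these force, two rows further north, a
   staircase: two diagonally adjacent empty lots over a row reading 0 1 1 ...,
   which is the shape of Type IV.  A staircase in turn yields a break or a
   border pattern in its own rows, so the row index would decrease forever.
   Type III leads to a staircase or a break directly, and the three rules are
   invariant under the reflection of columns. *)

From mathcomp Require Import all_boot zify.
Set Implicit Arguments. Unset Strict Implicit. Unset Printing Implicit Defensive.

(* Occupancy facts are useless to [lia] and make it exponentially slow. *)
Ltac lia_idx :=
  repeat match goal with h : ?D _ _ = _ |- _ =>
    lazymatch type of D with config => clear h end end; lia.

Definition empty_enclosed (m n : nat) (C : config) : Prop :=
  forall i c, 1 <= i <= m -> 1 <= c <= n -> C i c = false ->
    [/\ 2 <= c, c < n, i < m & [/\ C i c.-1, C i c.+1 & C i.+1 c]].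

Definition house_unblocked (m n : nat) (C : config) : Prop :=
  forall i c, 1 <= i < m -> 2 <= c < n ->
    C i c -> C i c.-1 -> C i c.+1 -> C i.+1 c = false.

(* A new house at (i,c) can only block (i,c-1), (i,c+1) or (i-1,c); of each
   case only the facts used below are recorded. *)
Definition empty_blocks_neighbour (m n : nat) (C : config) : Prop :=
  forall i c, 1 <= i <= m -> 1 <= c <= n -> C i c = false ->
    [\/ 3 <= c /\ C i.+1 c.-1,
        c.+2 <= n /\ C i.+1 c.+1 |
        2 <= i /\ [/\ C i.-1 c.-1, C i.-1 c & C i.-1 c.+1]].

Definition local_rules (m n : nat) (C : config) : Prop :=
  [/\ empty_enclosed m n C, house_unblocked m n C & empty_blocks_neighbour m n C].

Lemma add_house_other (C : config) i c a b :
  (a, b) != (i, c) -> add_house C i c a b = C a b.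
Proof. by rewrite /add_house xpair_eqE => /negbTE ->. Qed.

Section FromES.
Variables (m n : nat) (C : config).

Lemma resistant_predators_empty_enclosed :
  resistant_predators m n C -> empty_enclosed m n C.
Proof.
move=> hpred i c hi hc hic.
have := hpred i c ltac:(by rewrite /inside hi hc) hic.
rewrite /blocked /inside /add_house !eqxx /=.
rewrite (_ : (c.-1 == c) = false); last by apply/eqP; lia_idx.
rewrite (_ : (c.+1 == c) = false); last by apply/eqP; lia_idx.
rewrite (_ : (i.+1 == i) = false); last by apply/eqP; lia_idx.
case/and3P=> /andP[/andP[? ?] ?] /andP[/andP[? ?] ?] /andP[/andP[? ?] ?].
by split; try lia_idx.
Qed.

Lemma permissible_house_unblocked : permissible m n C -> house_unblocked m n C.
Proof.
move=> hperm i c hi hc hC hl hr; apply: negbTE; apply: contraNN (hperm i c _) => [hd|].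
  by rewrite /blocked /inside hC hl hr hd /=; apply/and4P; split; lia_idx.
by rewrite /inside; lia_idx.
Qed.

Lemma resistant_altruists_empty_blocks_neighbour :
  permissible m n C -> resistant_altruists m n C -> empty_blocks_neighbour m n C.
Proof.
move=> hperm halt i c hi hc hic.
have [a [b [hab [_ [hCab]]]]] := halt i c ltac:(by rewrite /inside hi hc) hic.
have nblk := hperm a b hab.
rewrite /blocked /inside; case/and4P=> _ /andP[hl Cl] /andP[hr Cr] /andP[hu Cu].
have [[ea el]|nl] := eqVneq (a, b.-1) (i, c).
  apply: Or32; rewrite add_house_other in Cu; last by apply/eqP; case; lia_idx.
  have eb : b = c.+1 by lia_idx.
  by subst a b; split; lia_idx.
have [[ea er]|nr] := eqVneq (a, b.+1) (i, c).
  apply: Or31; rewrite add_house_other in Cu; last by apply/eqP; case; lia_idx.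
  by subst a c; split=> //; lia_idx.
have [[eu eb]|nu] := eqVneq (a.+1, b) (i, c).
  apply: Or33; rewrite !add_house_other in Cl Cr; try by apply/eqP; case; lia_idx.
  by subst i c; split; [lia_idx | split].
rewrite !add_house_other // in Cl Cr Cu.
by move: nblk; rewrite /blocked /inside hCab hl Cl hr Cr hu Cu.
Qed.

End FromES.

Lemma ES_local_rules m n C : ES m n C -> local_rules m n C.
Proof.
case=> [[hperm _] [hpred halt]]; split.
- exact: resistant_predators_empty_enclosed.
- exact: permissible_house_unblocked.
- exact: resistant_altruists_empty_blocks_neighbour.
Qed.

Section Mirror.
Variables (m n : nat) (C : config).

Lemma mirror_empty_enclosed : empty_enclosed m n C -> empty_enclosed m n (mirror n C).
Proof.
rewrite /mirror => encl i c hi hc hic.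
have [? ? ? [hl hr hu]] := encl i (n.+1 - c) hi ltac:(lia_idx) hic.
rewrite (_ : n.+1 - c.-1 = (n.+1 - c).+1); last lia_idx.
by rewrite (_ : n.+1 - c.+1 = (n.+1 - c).-1); [split; try lia_idx; split|lia_idx].
Qed.

Lemma mirror_house_unblocked : house_unblocked m n C -> house_unblocked m n (mirror n C).
Proof.
rewrite /mirror => unbl i c hi hc hC.
rewrite (_ : n.+1 - c.-1 = (n.+1 - c).+1); last lia_idx.
rewrite (_ : n.+1 - c.+1 = (n.+1 - c).-1); last lia_idx.
by move=> hr hl; apply: unbl; rewrite //; lia_idx.
Qed.

Lemma mirror_empty_blocks_neighbour :
  empty_enclosed m n C -> empty_blocks_neighbour m n C ->
  empty_blocks_neighbour m n (mirror n C).
Proof.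
rewrite /mirror => encl nbr i c hi hc hic.
have [? ? _ _] := encl i (n.+1 - c) hi ltac:(lia_idx) hic.
rewrite (_ : n.+1 - c.-1 = (n.+1 - c).+1); last lia_idx.
rewrite (_ : n.+1 - c.+1 = (n.+1 - c).-1); last lia_idx.
case: (nbr i (n.+1 - c) hi ltac:(lia_idx) hic) => [[? hl]|[? hr]|[? [hl hu hr]]].
- by apply: Or32; split=> //; lia_idx.
- by apply: Or31; split=> //; lia_idx.
- by apply: Or33.
Qed.

Lemma mirror_local_rules : local_rules m n C -> local_rules m n (mirror n C).
Proof.
case=> encl unbl nbr; split.
- exact: mirror_empty_enclosed.
- exact: mirror_house_unblocked.
- exact: mirror_empty_blocks_neighbour.
Qed.

End Mirror.

Section Descent.
Variables (m n : nat) (C : config).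
Hypotheses (encl : empty_enclosed m n C) (unbl : house_unblocked m n C)
  (nbr : empty_blocks_neighbour m n C).

Lemma last_col_house i : 1 <= i <= m -> 0 < n -> C i n.
Proof.
move=> hi hn; case hC: (C i n) => //.
have [_ ? _ _] := encl (c := n) hi ltac:(lia_idx) hC; lia_idx.
Qed.

Lemma house_above_empty i c : 1 <= i < m -> 1 <= c <= n -> C i.+1 c = false -> C i c.
Proof.
move=> hi hc hu; case hC: (C i c) => //.
by have [_ _ _ [_ _]] := encl (i := i) ltac:(lia_idx) hc hC; rewrite hu.
Qed.

Lemma empty_between_houses i c : 1 <= i < m -> 2 <= c < n ->
  C i c.-1 -> C i c.+1 -> C i.+1 c -> C i c = false.
Proof. by move=> hi hc hl hr; apply: contraTF => hC; rewrite (unbl hi hc hC hl hr). Qed.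

Lemma empty_right_of_houses i c : 1 <= i < m -> 2 <= c < n ->
  C i c.-1 -> C i c -> C i.+1 c -> C i c.+1 = false.
Proof. by move=> hi hc hl hC; apply: contraTF => hr; rewrite (unbl hi hc hC hl hr). Qed.

Lemma empty_left_of_houses i c : 1 <= i < m -> 2 <= c < n ->
  C i c -> C i c.+1 -> C i.+1 c -> C i c.-1 = false.
Proof. by move=> hi hc hC hr; apply: contraTF => hl; rewrite (unbl hi hc hC hl hr). Qed.

Definition row011 q x w := forall c, x <= c <= w -> C q c = ((c - x) %% 3 != 0).

Lemma row011_empty q x w c :
  row011 q x w -> x <= c <= w -> (c - x) %% 3 = 0 -> C q c = false.
Proof. by move=> hrow hc h3; rewrite hrow // h3. Qed.

Lemma row011_house q x w c :
  row011 q x w -> x <= c <= w -> (c - x) %% 3 != 0 -> C q c.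
Proof. by move=> hrow hc h3; rewrite hrow. Qed.

Lemma row011_sub q x w x' w' :
  row011 q x w -> x <= x' -> w' <= w -> (x' - x) %% 3 = 0 -> row011 q x' w'.
Proof. by move=> hrow hx hw h3 c hc; rewrite hrow; lia_idx. Qed.

Lemma row011_single q x : C q x = false -> row011 q x x.
Proof. by move=> hC c hc; rewrite (_ : c = x) ?subnn ?hC //; lia_idx. Qed.

Lemma row011_rcons q x w :
  row011 q x w -> x <= w.+1 -> C q w.+1 = ((w.+1 - x) %% 3 != 0) -> row011 q x w.+1.
Proof.
move=> hrow hx hC c hc; case: (ltnP c w.+1) => hcw; first by apply: hrow; lia_idx.
by rewrite (_ : c = w.+1) //; lia_idx.
Qed.

Lemma row011_cons3 q x w :
  C q x = false -> C q x.+1 -> C q x.+2 -> row011 q x.+3 w -> row011 q x w.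
Proof.
move=> h0 h1 h2 hrow c hc; case: (ltnP c x.+3) => hcx; last by rewrite hrow; lia_idx.
have [->|[->|->]] : c = x \/ c = x.+1 \/ c = x.+2 by lia_idx.
all: by rewrite ?h0 ?h1 ?h2; lia_idx.
Qed.

Lemma row011_cat q x y w :
  row011 q x y -> row011 q y w -> x <= y -> (y - x) %% 3 = 0 -> row011 q x w.
Proof.
move=> hxy hyw hx h3 c hc; case: (leqP c y) => hcy; first by apply: hxy; lia_idx.
by rewrite hyw; lia_idx.
Qed.

Lemma row011_border q x e : 1 <= q <= m -> 1 <= x <= e -> (e - x) %% 3 = 0 ->
  e <= n <= e.+2 -> row011 q x e -> row011 q x n.
Proof.
move=> hq hx h3 hn hrow.
have he : C q e = false by apply: (row011_empty hrow); lia_idx.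
have [_ hen _ [_ he1 _]] := encl (c := e) hq ltac:(lia_idx) he.
have hrow1 : row011 q x e.+1 by apply: (row011_rcons hrow); rewrite ?he1; lia_idx.
have hlast : C q n by apply: last_col_house; lia_idx.
have [->|hn2] : n = e.+1 \/ n = e.+2 by lia_idx.
  exact: hrow1.
by rewrite hn2 in hlast *; apply: (row011_rcons hrow1); rewrite ?hlast; lia_idx.
Qed.

Definition broken011 q x k :=
  [/\ row011 q x (x + 3 * k), C q (x + 3 * k).+1 & C q (x + 3 * k).+2 = false].

Lemma scan011_right q x k : 1 <= q < m -> 1 <= x -> x + 3 * k <= n ->
  (forall j, j < k -> C q.+1 (x + 3 * j).+2) -> C q x = false ->
  (exists2 j, j < k & broken011 q x j) \/ row011 q x (x + 3 * k).
Proof.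
move=> hq hx; elim: k => [|k IH] hk hbelow hx0.
  by right; rewrite muln0 addn0; apply: row011_single.
have [[j hj hbr]|hrow] := IH ltac:(lia_idx) (fun j hj => hbelow j (ltnW hj)) hx0.
  by left; exists j => //; apply: ltnW.
have he : C q (x + 3 * k) = false by apply: (row011_empty hrow); lia_idx.
have [_ _ _ [_ he1 _]] := encl (i := q) (c := x + 3 * k) ltac:(lia_idx) ltac:(lia_idx) he.
case he2: (C q (x + 3 * k).+2); last by left; exists k.
have he3 : C q (x + 3 * k).+3 = false.
  have := hbelow k (ltnSn k).
  by apply: (empty_right_of_houses (c := (x + 3 * k).+2)) => //; lia_idx.
right; rewrite (_ : x + 3 * k.+1 = (x + 3 * k).+3); last lia_idx.
by apply: (row011_cat hrow (row011_cons3 he he1 he2 (row011_single he3))); lia_idx.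
Qed.

Lemma scan011_left q y K w : 1 <= q < m -> 1 <= y -> (y + 3 * K).+2 <= w <= n ->
  (forall i, 1 <= i <= K -> C q.+1 (y + 3 * i)) -> C q y = false ->
  row011 q (y + 3 * K).+2 w ->
  exists2 i, i <= K & C q (y + 3 * i) = false /\ row011 q (y + 3 * i).+2 w.
Proof.
move=> hq hy; elim: K => [|K IH] hK hbelow hy0 hrow.
  by exists 0; rewrite // muln0 addn0 in hrow *.
rewrite (_ : (y + 3 * K.+1).+2 = (y + 3 * K).+2.+3) in hK hrow; last lia_idx.
have hs3 : C q (y + 3 * K).+2.+3 = false by apply: (row011_empty hrow); lia_idx.
have [_ _ _ [hs2 _ _]] :=
  encl (i := q) (c := (y + 3 * K).+2.+3) ltac:(lia_idx) ltac:(lia_idx) hs3.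
case hs1: (C q (y + 3 * K).+3); last first.
  by exists K.+1 => //; rewrite (_ : y + 3 * K.+1 = (y + 3 * K).+3) //; lia_idx.
have hs0 : C q (y + 3 * K).+2 = false.
  apply: (empty_left_of_houses (c := (y + 3 * K).+3)) => //; first lia_idx.
  by rewrite (_ : (y + 3 * K).+3 = y + 3 * K.+1); [apply: hbelow|]; lia_idx.
have [i hi hres] := IH ltac:(lia_idx) (fun i hi => hbelow i ltac:(lia_idx)) hy0
  (row011_cons3 hs0 hs1 hs2 hrow).
by exists i => //; apply: leqW.
Qed.

Lemma empty_pair_above q a : 1 <= q < m -> 1 <= a -> a.+2 <= n ->
  C q.+1 a = false -> C q.+1 a.+2 = false ->
  exists2 r, q = r.+1 &
    [/\ 0 < r, [/\ C q a.-1, C q a.+1 = false & C q a.+3], C r a & C r a.+3 = false].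
Proof.
move=> hq ha han h0 h2.
have [? _ _ [_ h1 _]] := encl (i := q.+1) (c := a) ltac:(lia_idx) ltac:(lia_idx) h0.
have [_ ? _ _] := encl (i := q.+1) (c := a.+2) ltac:(lia_idx) ltac:(lia_idx) h2.
have ca0 : C q a by apply: house_above_empty => //; lia_idx.
have ca2 : C q a.+2 by apply: house_above_empty => //; lia_idx.
have ca1 : C q a.+1 = false by apply: empty_between_houses => //; lia_idx.
case: (nbr (i := q) (c := a.+1) ltac:(lia_idx) ltac:(lia_idx) ca1)
  => [[_]|[_]|[hq2 [r0 r1 r2]]].
- by rewrite h0.
- by rewrite h2.
have [r eqr] : exists r, q = r.+1 by exists q.-1; lia_idx.
subst q.
have rl : C r a.-1 = false.
  by apply: (empty_left_of_houses (c := a)) => //; lia_idx.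
have rr : C r a.+3 = false.
  by apply: (empty_right_of_houses (c := a.+2)) => //; lia_idx.
have [_ _ _ [_ _ ql]] := encl (i := r) (c := a.-1) ltac:(lia_idx) ltac:(lia_idx) rl.
have [_ _ _ [_ _ qr]] := encl (i := r) (c := a.+3) ltac:(lia_idx) ltac:(lia_idx) rr.
by exists r.
Qed.

(* [stair (i-1) (j-1) n] is the Type IV constellation at (i,j). *)
Definition stair p o w :=
  [/\ 0 < p, p.+2 <= m, 0 < o, o.+2 <= w <= n &
      [/\ C p o = false, C p.+1 o.+1 = false & row011 p.+2 o.+2 w]].

Lemma stair_above q a w : 1 <= q < m -> 1 <= a -> a + 5 <= w <= n ->
  C q.+1 a = false -> row011 q.+1 a.+2 w -> exists2 s, q = s.+1 & stair s a.+3 w.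
Proof.
move=> hq ha hw h0 hrow.
have h2 : C q.+1 a.+2 = false by apply: (row011_empty hrow); lia_idx.
have [s eqs [hs [_ _ hq3] _ hs3]] := empty_pair_above hq ha ltac:(lia_idx) h0 h2.
subst q.
have h4 : C s.+2 a.+4 by apply: (row011_house hrow); lia_idx.
have h5 : C s.+2 a.+4.+1 = false by apply: (row011_empty hrow); lia_idx.
have hq5 : C s.+1 a.+4.+1 by apply: house_above_empty => //; lia_idx.
have hq4 : C s.+1 a.+4 = false by apply: empty_between_houses => //; lia_idx.
exists s => //; split; try lia_idx; split => //.
by apply: (row011_sub hrow); lia_idx.
Qed.

Definition closed_stair p o w := [/\ stair p o w, (w - o.+2) %% 3 = 0 & C p.+1 w.-1].

Definition ledge_break q y k :=
  [/\ 0 < q < m, 0 < y, (y + 3 * k).+3 <= n, C q y = false & broken011 q.+1 y.+1 k].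

Definition ledge_border p o :=
  [/\ 0 < p < m, 0 < o, C p o = false, row011 p.+1 o.+1 n & (n - o.+1) %% 3 = 2].

Lemma closed_stair_ledge_break p o w : closed_stair p o w -> exists k, ledge_break p o k.
Proof.
case=> [[hp hpm ho hw [h0 h1 hrow]] h3 hcl].
have [J hJ] : exists J, w = o.+2 + 3 * J by exists ((w - o.+2) %/ 3); lia_idx.
have hbelow j : j < J -> C p.+2 (o.+1 + 3 * j).+2.
  by move=> hj; apply: (row011_house hrow); lia_idx.
have [[k hk hbr]|hrow1] := scan011_right (q := p.+1) (x := o.+1) (k := J)
  ltac:(lia_idx) ltac:(lia_idx) ltac:(lia_idx) hbelow h1.
  by exists k; split => //; lia_idx.
by move: hcl; rewrite (row011_empty hrow1) //; lia_idx.
Qed.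

Lemma ledge_break_closed_stair q y k : ledge_break q y k ->
  exists s o w, s.+2 = q /\ closed_stair s o w.
Proof.
case=> hq hy hn hy0 [hrow1 he1 he2].
have he0 : C q.+1 (y.+1 + 3 * k) = false by apply: (row011_empty hrow1); lia_idx.
have [r eqr [hr [hql hqr _] hre _]] := empty_pair_above (q := q) (a := y.+1 + 3 * k)
  ltac:(lia_idx) ltac:(lia_idx) ltac:(lia_idx) he0 he2.
have hbelow i : 1 <= i <= k -> C q.+1 (y + 3 * i).
  by move=> hi; apply: (row011_house hrow1); lia_idx.
have [i hi [hi0 hrow]] := scan011_left (q := q) (y := y) (K := k) (w := (y + 3 * k).+2)
  ltac:(lia_idx) ltac:(lia_idx) ltac:(lia_idx) hbelow hy0 (row011_single hqr).
have hik : i < k.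
  rewrite ltn_neqAle hi andbT; apply/eqP => eik.
  by move: hql; rewrite addSn /= -eik hi0.
subst q.
have [s eqs hst] := stair_above (q := r) (a := y + 3 * i) (w := (y + 3 * k).+2)
  ltac:(lia_idx) ltac:(lia_idx) ltac:(lia_idx) hi0 hrow.
subst r.
by exists s, (y + 3 * i).+3, (y + 3 * k).+2; split => //; split => //; lia_idx.
Qed.

Lemma no_ledge_break q y k : ~ ledge_break q y k.
Proof.
elim/ltn_ind: q y k => q IH y k /ledge_break_closed_stair [s [o [w [eqs hst]]]].
have [k' hk'] := closed_stair_ledge_break hst.
by apply: (IH s _ _ _ hk'); rewrite -eqs.
Qed.

Lemma ledge_border_stair p o : ledge_border p o -> exists s o', s.+2 = p /\ stair s o' n.
Proof.
case=> hp ho hp0 hrow1 hres.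
have [K hK] : exists K, n = (o + 3 * K).+3 by exists ((n - o.+1) %/ 3); lia_idx.
have hb0 : C p.+1 (o + 3 * K).+1 = false by apply: (row011_empty hrow1); lia_idx.
have hb1 : C p.+1 (o + 3 * K).+2 by apply: (row011_house hrow1); lia_idx.
have hn : C p (o + 3 * K).+3 by rewrite -hK; apply: last_col_house; lia_idx.
have ha0 : C p (o + 3 * K).+1 by apply: house_above_empty => //; lia_idx.
have ha1 : C p (o + 3 * K).+2 = false by apply: empty_between_houses => //; lia_idx.
have hp2 : 2 <= p.
  case: (nbr (i := p) (c := (o + 3 * K).+2) ltac:(lia_idx) ltac:(lia_idx) ha1)
    => [[_]|[]|[] //].
    by rewrite hb0.
  lia_idx.
have [q eqp] : exists q, p = q.+1 by exists p.-1; lia_idx.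
subst p.
have hbelow i : 1 <= i <= K -> C q.+2 (o + 3 * i).
  by move=> hi; apply: (row011_house hrow1); lia_idx.
have hrow : row011 q.+1 (o + 3 * K).+2 n.
  by rewrite hK; apply: (row011_rcons (row011_single ha1)); rewrite ?hn; lia_idx.
have [i hi [hi0 hrowi]] := scan011_left (q := q.+1) (y := o) (K := K) (w := n)
  ltac:(lia_idx) ltac:(lia_idx) ltac:(lia_idx) hbelow hp0 hrow.
have hiK : i < K.
  rewrite ltn_neqAle hi andbT; apply/eqP => eiK; rewrite eiK in hi0.
  have [r eqr [hr _ _ hr3]] := empty_pair_above (q := q) (a := o + 3 * K)
    ltac:(lia_idx) ltac:(lia_idx) ltac:(lia_idx) hi0 ha1.
  have [_ ? _ _] := encl (i := r) (c := (o + 3 * K).+3) ltac:(lia_idx) ltac:(lia_idx) hr3.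
  lia_idx.
have [s eqs hst] := stair_above (q := q) (a := o + 3 * i) (w := n)
  ltac:(lia_idx) ltac:(lia_idx) ltac:(lia_idx) hi0 hrowi.
by exists s, (o + 3 * i).+3; rewrite eqs.
Qed.

Lemma stair_open_cases p o : stair p o n ->
  [\/ ledge_border p.+1 o.+1, ledge_border p o | exists k, ledge_break p o k].
Proof.
case=> hp hpm ho hn [h0 h1 hrow].
have : (n - o.+2) %% 3 < 3 by rewrite ltn_mod.
case hres: ((n - o.+2) %% 3) => [|[|[|//]]] _.
- have hlast : C p.+2 n by apply: last_col_house; lia_idx.
  by rewrite (row011_empty hrow) in hlast; lia_idx.
- have [K hK] : exists K, n = (o.+1 + 3 * K).+2 by exists ((n - o.+2) %/ 3); lia_idx.
  have hbelow j : j < K -> C p.+2 (o.+1 + 3 * j).+2.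
    by move=> hj; apply: (row011_house hrow); lia_idx.
  have [[k hk hbr]|hrowK] := scan011_right (q := p.+1) (x := o.+1) (k := K)
    ltac:(lia_idx) ltac:(lia_idx) ltac:(lia_idx) hbelow h1.
    by apply: Or33; exists k; split => //; lia_idx.
  apply: Or32; split => //; try lia_idx.
  by apply: (row011_border (e := o.+1 + 3 * K) _ _ _ _ hrowK); lia_idx.
- by apply: Or31; split => //; lia_idx.
Qed.

Lemma no_stair_open p o : ~ stair p o n.
Proof.
elim/ltn_ind: p o => p IH o /stair_open_cases [hb|hb|[k hk]]; last exact: no_ledge_break hk.
all: have [s [o' [eqs hs]]] := ledge_border_stair hb.
all: by apply: (IH s _ o' hs); lia_idx.
Qed.

Lemma no_typeIV i j : ~ typeIV m n C i j.
Proof.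
case: i j => [|[|p]] [|[|o]] [/andP[hi hm] [/andP[hj hn] [h0 [h1 [_ hrow]]]]] //.
apply: (no_stair_open (p := p.+1) (o := o.+1)); split; try lia_idx; split => //.
by move=> c hc; rewrite hrow addn1.
Qed.

Lemma no_typeIII i j : ~ typeIII m n C i j.
Proof.
case: i j => [|[|p]] [|[|o]] [/andP[hi hm] [/andP[hj hn] [h0 [h1 [h2 hfull]]]]] //.
have [K hK] : exists K, o.+3 + 3 * K <= n <= (o.+3 + 3 * K).+2.
  by exists ((n - o.+3) %/ 3); lia_idx.
rewrite addn2 addn1 in hfull.
have hbelow l : l < K -> C p.+4 (o.+3 + 3 * l).+2 by move=> hl; apply: hfull; lia_idx.
have [[k hk hbr]|hrowK] := scan011_right (q := p.+3) (x := o.+3) (k := K)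
  ltac:(lia_idx) ltac:(lia_idx) ltac:(lia_idx) hbelow h2.
  by apply: (@no_ledge_break p.+2 o.+2 k); split => //; lia_idx.
apply: (no_stair_open (p := p.+1) (o := o.+1)); split; try lia_idx; split => //.
by apply: (row011_border (e := o.+3 + 3 * K) _ _ _ _ hrowK); lia_idx.
Qed.

End Descent.

Theorem mainTheorem10 (m n : nat) (C : config) :
  ES m n C ->
  ~ exists i j,
      typeIII m n C i j \/ typeIV m n C i j \/
      typeIII m n (mirror n C) i j \/ typeIV m n (mirror n C) i j.
Proof.
move=> hES [i [j hij]].
have rules := ES_local_rules hES.
have [encl unbl nbr] := rules.
have [encl' unbl' nbr'] := mirror_local_rules rules.
case: hij => [|[|[|]]].
- exact: (no_typeIII encl unbl nbr).
- exact: (no_typeIV encl unbl nbr).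
- exact: (no_typeIII encl' unbl' nbr').
- exact: (no_typeIV encl' unbl' nbr').
Qed.
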